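(* For every positive integer $t$, $md_t \leq \left\lceil \frac{t+1}{2} \right\rceil$.
   Context: Let $t$ be a positive integer (the number of topics). A voter matrix with $t$ topics is a matrix $V\in\{Y,N\}^{n\times t}$ for some positive integer $n$ (the number of voters; rows are voters), subject to the standing assumption that in every column the number of entries $Y$ is at least the number of entries $N$ (so $Y$ is the majority opinion on every topic). $\mathcal{V}_t$ denotes the set of all voter matrices with $t$ topics and any number of voters. A proposal is a vector $p\in\{Y,N\}^t$. A voter (row) $v$ supports $p$ if the Hamming distance between $v$ and $p$ is at most $t/2$. A proposal $p$ is supported by $V$ if at least $n/2$ of the rows of $V$ support $p$. The number of majority decisions of a proposal is its number of entries $Y$. For $V$, $md_V$ is the maximum number $m$ such that there exists a proposal supported by $V$ with $m$ majority decisions, and $md_t=\min_{V\in\mathcal{V}_t} md_V$. *)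

From mathcomp Require Import all_boot all_algebra.
Set Implicit Arguments. Unset Strict Implicit. Unset Printing Implicit Defensive.

(* Entries: true = Y, false = N. Rows are voters, columns topics. *)

Definition voter_matrix (n t : nat) (V : 'M[bool]_(n, t)) : bool :=
  (0 < n) && [forall j : 'I_t, #|[set i | ~~ V i j]| <= #|[set i | V i j]|].

Definition hdist n t (V : 'M[bool]_(n, t)) (i : 'I_n) (p : {ffun 'I_t -> bool}) : nat :=
  #|[set j | V i j != p j]|.

Definition supports n t (V : 'M[bool]_(n, t)) (i : 'I_n) (p : {ffun 'I_t -> bool}) : bool :=
  2 * hdist V i p <= t.

Definition supported n t (V : 'M[bool]_(n, t)) (p : {ffun 'I_t -> bool}) : bool :=
  n <= 2 * #|[set i | supports V i p]|.

(* number of majority decisions = number of Y entries *)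
Definition num_md t (p : {ffun 'I_t -> bool}) : nat := #|[set j | p j]|.

Definition md_V n t (V : 'M[bool]_(n, t)) : nat :=
  \max_(p : {ffun 'I_t -> bool} | supported V p) num_md p.

(* md_t <= m  iff  some voter matrix V with t topics has md_V <= m
   (the minimum over the nonempty set of values md_V is attained). *)
Definition md_t_le (t m : nat) : Prop :=
  exists (n : nat) (V : 'M[bool]_(n, t)), voter_matrix V /\ md_V V <= m.

From mathcomp Require Import all_boot all_algebra.
From mathcomp Require Import zify.

Set Implicit Arguments.
Unset Strict Implicit.
Unset Printing Implicit Defensive.

(* Stack the t unit rows (one Y each) over t - 1 all-Y rows: every column has
   t entries Y against t - 1 entries N.  A unit row is within Hamming distance
   t/2 of p only if p has at most t/2 + 1 entries Y, so a proposal with more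
   majority decisions can only be supported by the t - 1 all-Y rows, which are
   fewer than half of the 2t - 1 voters. *)

Lemma card_split_ord m n (P : pred 'I_(m + n)) :
  #|[set i | P i]| = #|[set i | P (lshift n i)]| + #|[set i | P (rshift m i)]|.
Proof.
rewrite -!sum1_card big_split_ord /=.
by congr (_ + _); apply: eq_bigl => i; rewrite !inE.
Qed.

Lemma num_md_le_hdist n t (V : 'M[bool]_(n, t)) i p :
  num_md p <= hdist V i p + #|[set j | V i j]|.
Proof.
have sub : [set j | p j] \subset [set j | V i j != p j] :|: [set j | V i j].
  by apply/subsetP => j; rewrite !inE; case: (V i j); case: (p j).
exact: leq_trans (subset_leq_card sub) (leq_card_setU _ _).1.
Qed.

Definition units_over_ones_mx t : 'M[bool]_(t + t.-1, t) :=
  col_mx (\matrix_(i, j) (i == j)) (const_mx true).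

Section UnitsOverOnes.

Variable t : nat.
Hypothesis t_gt0 : 0 < t.

Local Notation V := (units_over_ones_mx t).

Lemma card_yes_units_over_ones j : #|[set i | V i j]| = t.
Proof.
rewrite card_split_ord.
have -> : [set i | V (lshift t.-1 i) j] = [set j].
  by apply/setP => i; rewrite !inE col_mxEu mxE.
have -> : [set i | V (rshift t i) j] = setT.
  by apply/setP => i; rewrite !inE col_mxEd mxE.
by rewrite cards1 cardsT card_ord add1n prednK.
Qed.

Lemma voter_matrix_units_over_ones : voter_matrix V.
Proof.
rewrite /voter_matrix addn_gt0 t_gt0; apply/forallP => j.
have := cardsC [set i | V i j].
rewrite card_yes_units_over_ones card_ord.
have -> : ~: [set i | V i j] = [set i | ~~ V i j] by apply/setP => i; rewrite !inE.
lia.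
Qed.

Lemma num_md_le_of_unit_row_supports i p :
  supports V (lshift t.-1 i) p -> num_md p <= (t.+2)./2.
Proof.
have row_i : #|[set j | V (lshift t.-1 i) j]| = 1.
  rewrite -(cards1 i); apply: eq_card => j.
  by rewrite !inE col_mxEu mxE eq_sym.
have := num_md_le_hdist V (lshift t.-1 i) p; rewrite row_i /supports.
have := odd_double_half t; lia.
Qed.

Lemma card_supporters_le p :
  (t.+2)./2 < num_md p -> #|[set i | supports V i p]| <= t.-1.
Proof.
move=> many_yes; rewrite card_split_ord.
have -> : [set i | supports V (lshift t.-1 i) p] = set0.
  apply/setP => i; rewrite !inE; apply: contraTF many_yes => supp.
  by rewrite -leqNgt (num_md_le_of_unit_row_supports supp).
by rewrite cards0 -[X in _ <= X]card_ord max_card.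
Qed.

Lemma md_V_units_over_ones : md_V V <= (t.+2)./2.
Proof.
apply/bigmax_leqP => p; rewrite /supported => supp.
rewrite leqNgt; apply/negP => /card_supporters_le.
move: supp; lia.
Qed.

End UnitsOverOnes.

Theorem lemma4p2 (t : nat) : 0 < t -> md_t_le t (t.+2)./2.
Proof.
move=> t_gt0; exists (t + t.-1), (units_over_ones_mx t); split.
- exact: voter_matrix_units_over_ones.
- exact: md_V_units_over_ones.
Qed.
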